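(* Let $n$ be a positive integer and $\alpha,\beta\in\mathbb{R}$. If $\lambda$ is an eigenvalue of $A_n^{\alpha,\beta}$, then \[ |\lambda|\ \le\ T_n\cdot\max\{1,n^{2\beta}\}\cdot\max_{1\le i\le n}|J_{\alpha-\beta}(i)| . \]
   Context: For $i,j$ positive integers, $(i,j)$ denotes the greatest common divisor and $[i,j]$ the least common multiple. For $\alpha,\beta\in\mathbb{R}$ and a positive integer $n$, $A_n^{\alpha,\beta}$ is the $n\times n$ real matrix with $(i,j)$ entry $(i,j)^{\alpha}[i,j]^{\beta}$. $E_n$ is the $n\times n$ matrix with $(E_n)_{ij}=1$ if $j\mid i$ and $(E_n)_{ij}=0$ otherwise; $T_n$ denotes the largest eigenvalue of the symmetric matrix $E_n^{T}E_n$. For real $s$, $J_s$ is the arithmetical function $J_s(k)=k^{s}\prod_{p\mid k}\left(1-p^{-s}\right)$ (product over primes $p$ dividing $k$), equivalently $J_s(k)=\sum_{d\mid k} d^{s}\mu(k/d)$ where $\mu$ is the Möbius function. *)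

From Stdlib Require Import Reals Arith List ZArith Znumtheory.
Import ListNotations.
Open Scope R_scope.

Definition sumR (n : nat) (f : nat -> R) : R :=
  fold_right Rplus 0 (map f (seq 1 n)).

(* max_{1<=i<=n} f i, for nonnegative f (default 0 for n = 0) *)
Definition maxR (n : nat) (f : nat -> R) : R :=
  fold_right Rmax 0 (map f (seq 1 n)).

(* Matrices are indexed by 1..n: M i j for 1 <= i,j <= n. *)
Definition A_ab (alpha beta : R) (i j : nat) : R :=
  Rpower (INR (Nat.gcd i j)) alpha * Rpower (INR (Nat.lcm i j)) beta.

Definition E_mat (i j : nat) : R :=
  if Nat.eqb (i mod j) 0 then 1 else 0.

Definition EtE (n : nat) (i j : nat) : R :=
  sumR n (fun k => E_mat k i * E_mat k j).

Definition IsEigenvalue (n : nat) (M : nat -> nat -> R) (lam : R) : Prop :=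
  exists x : nat -> R,
    (exists i, (1 <= i <= n)%nat /\ x i <> 0) /\
    forall i, (1 <= i <= n)%nat -> sumR n (fun j => M i j * x j) = lam * x i.

Definition IsLargestEigenvalue (n : nat) (M : nat -> nat -> R) (T : R) : Prop :=
  IsEigenvalue n M T /\ forall mu, IsEigenvalue n M mu -> mu <= T.

Definition Jordan (s : R) (k : nat) : R :=
  Rpower (INR k) s *
  fold_right Rmult 1
    (map (fun p => if prime_dec (Z.of_nat p) then
                     if Nat.eqb (k mod p) 0 then 1 - Rpower (INR p) (- s) else 1
                   else 1)
         (seq 1 k)).

From Stdlib Require Import Reals Lra Lia List Arith ZArith Znumtheory.
From mathcomp Require all_boot all_algebra zify Rstruct.
Open Scope R_scope.

(* With s = alpha - beta and D = diag(i^beta), the identities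
     (i,j)^alpha [i,j]^beta = i^beta (i,j)^s j^beta,   (i,j)^s = sum_{k | (i,j)} J_s(k)
   give the factorization  A = D E diag(J_s) E^T D,  E the divisibility matrix.
   Hence for an eigenpair  A x = lam x  and  w = E^T D x,
     |lam| |x|^2 = |sum_k J_s(k) w_k^2| <= max|J_s| |w|^2
                 <= max|J_s| T |D x|^2 <= max|J_s| T max(1, n^(2 beta)) |x|^2,
   where |E^T y|^2 <= T |y|^2 because E and E^T have the same norm, and
   |E v|^2 = v^T E^T E v <= T |v|^2 is the Rayleigh bound for the largest
   eigenvalue T of E^T E. *)

Lemma sumR_S n f : sumR (S n) f = sumR n f + f (S n).
Proof.
  unfold sumR. rewrite seq_S, map_app, fold_right_app. simpl.
  replace (1 + n)%nat with (S n) by lia.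
  induction (map f (seq 1 n)) as [|a l IH]; simpl; lra.
Qed.

Lemma sumR_ext n f g :
  (forall i, (1 <= i <= n)%nat -> f i = g i) -> sumR n f = sumR n g.
Proof.
  induction n as [|n IH]; intros H; [reflexivity|].
  rewrite !sumR_S, IH by (intros; apply H; lia). rewrite H by lia. reflexivity.
Qed.

Lemma sumR_plus n f g : sumR n (fun i => f i + g i) = sumR n f + sumR n g.
Proof. induction n as [|n IH]; [unfold sumR; simpl; lra|]. rewrite !sumR_S, IH. lra. Qed.

Lemma sumR_scal n c f : sumR n (fun i => c * f i) = c * sumR n f.
Proof. induction n as [|n IH]; [unfold sumR; simpl; lra|]. rewrite !sumR_S, IH. lra. Qed.

Lemma sumR_zero n f : (forall i, (1 <= i <= n)%nat -> f i = 0) -> sumR n f = 0.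
Proof.
  induction n as [|n IH]; intros H; [reflexivity|].
  rewrite sumR_S, IH by (intros; apply H; lia). rewrite H by lia. ring.
Qed.

Lemma sumR_le n f g :
  (forall i, (1 <= i <= n)%nat -> f i <= g i) -> sumR n f <= sumR n g.
Proof.
  induction n as [|n IH]; intros H; [unfold sumR; simpl; lra|]. rewrite !sumR_S.
  apply Rplus_le_compat; [apply IH; intros; apply H|apply H]; lia.
Qed.

Lemma sumR_nonneg n f : (forall i, (1 <= i <= n)%nat -> 0 <= f i) -> 0 <= sumR n f.
Proof.
  induction n as [|n IH]; intros H; [unfold sumR; simpl; lra|]. rewrite sumR_S.
  apply Rplus_le_le_0_compat; [apply IH; intros; apply H|apply H]; lia.
Qed.

Lemma sumR_term_le n f i :
  (forall k, (1 <= k <= n)%nat -> 0 <= f k) -> (1 <= i <= n)%nat -> f i <= sumR n f.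
Proof.
  induction n as [|n IH]; intros H Hi; [lia|]. rewrite sumR_S.
  destruct (Nat.eq_dec i (S n)) as [->|Hne].
  - assert (0 <= sumR n f) by (apply sumR_nonneg; intros; apply H; lia). lra.
  - assert (f i <= sumR n f) by (apply IH; [intros; apply H|]; lia).
    assert (0 <= f (S n)) by (apply H; lia). lra.
Qed.

Lemma sumR_swap n m (F : nat -> nat -> R) :
  sumR n (fun i => sumR m (fun j => F i j)) = sumR m (fun j => sumR n (fun i => F i j)).
Proof.
  induction n as [|n IH].
  - symmetry. apply sumR_zero. reflexivity.
  - rewrite sumR_S, IH, <- sumR_plus. apply sumR_ext. intros. symmetry. apply sumR_S.
Qed.

Lemma sumR_mul n m f g :
  sumR n f * sumR m g = sumR n (fun i => sumR m (fun j => f i * g j)).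
Proof.
  rewrite Rmult_comm, <- sumR_scal. apply sumR_ext. intros i _.
  rewrite Rmult_comm, <- sumR_scal. apply sumR_ext. intros; ring.
Qed.

Lemma sumR_delta n i f : (1 <= i <= n)%nat ->
  sumR n (fun j => if Nat.eqb i j then f j else 0) = f i.
Proof.
  intros Hi. induction n as [|n IH]; [lia|]. rewrite sumR_S.
  destruct (Nat.eq_dec i (S n)) as [->|Hne].
  - rewrite Nat.eqb_refl, sumR_zero; [ring|].
    intros j Hj. destruct (Nat.eqb_spec (S n) j); [lia|reflexivity].
  - rewrite IH by lia. destruct (Nat.eqb_spec i (S n)); [lia|ring].
Qed.

Lemma sumR_abs n f : Rabs (sumR n f) <= sumR n (fun i => Rabs (f i)).
Proof.
  induction n as [|n IH]; [unfold sumR; simpl; rewrite Rabs_R0; lra|]. rewrite !sumR_S.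
  eapply Rle_trans; [apply Rabs_triang|]. lra.
Qed.

Definition dot n (u v : nat -> R) : R := sumR n (fun i => u i * v i).
(* the squared Euclidean norm |v|^2 *)
Definition nrm n (v : nat -> R) : R := dot n v v.
Definition mv n (M : nat -> nat -> R) (v : nat -> R) : nat -> R :=
  fun i => sumR n (fun j => M i j * v j).
Definition bil n (M : nat -> nat -> R) (u v : nat -> R) : R := dot n u (mv n M v).
Definition tr (M : nat -> nat -> R) : nat -> nat -> R := fun i j => M j i.
Definition idm (i j : nat) : R := if Nat.eqb i j then 1 else 0.
Definition symmetric n (M : nat -> nat -> R) : Prop :=
  forall i j, (1 <= i <= n)%nat -> (1 <= j <= n)%nat -> M i j = M j i.

Lemma nrm_nonneg n v : 0 <= nrm n v.
Proof. apply sumR_nonneg. intros. nra. Qed.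

Lemma nrm_coord n v i : (1 <= i <= n)%nat -> v i * v i <= nrm n v.
Proof. intros. apply (sumR_term_le n (fun i => v i * v i)); auto. intros; nra. Qed.

Lemma nrm_pos n v i : (1 <= i <= n)%nat -> v i <> 0 -> 0 < nrm n v.
Proof.
  intros Hi Hv. pose proof (nrm_coord n v i Hi).
  assert (0 < v i * v i) by (destruct (Rlt_dec 0 (v i)); [nra|assert (v i < 0) by lra; nra]).
  lra.
Qed.

Lemma mv_idm n v i : (1 <= i <= n)%nat -> mv n idm v i = v i.
Proof.
  intros Hi. unfold mv. rewrite <- (sumR_delta n i v Hi).
  apply sumR_ext. intros j _. unfold idm. destruct (Nat.eqb i j); ring.
Qed.

Lemma dot_mv_tr n M u v : dot n (mv n (tr M) u) v = dot n u (mv n M v).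
Proof.
  unfold dot, mv, tr.
  transitivity (sumR n (fun i => sumR n (fun j => u j * M j i * v i))).
  { apply sumR_ext. intros i _. rewrite Rmult_comm, <- sumR_scal.
    apply sumR_ext. intros; ring. }
  rewrite sumR_swap. apply sumR_ext. intros j _. rewrite <- sumR_scal.
  apply sumR_ext. intros; ring.
Qed.

Lemma bil_sym n M u v : symmetric n M -> bil n M u v = bil n M v u.
Proof.
  intros HM. unfold bil. rewrite <- dot_mv_tr. unfold dot.
  apply sumR_ext. intros i Hi. rewrite Rmult_comm. f_equal.
  unfold mv, tr. apply sumR_ext. intros j Hj. rewrite HM by auto. reflexivity.
Qed.

Lemma bil_idm n u v : bil n idm u v = dot n u v.
Proof. unfold bil, dot. apply sumR_ext. intros i Hi. rewrite mv_idm by auto. reflexivity. Qed.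

Lemma bil_line n M u v t :
  bil n M (fun i => u i + t * v i) (fun i => u i + t * v i) =
  bil n M u u + t * (bil n M u v + bil n M v u) + t * t * bil n M v v.
Proof.
  unfold bil, dot, mv.
  rewrite <- !sumR_scal, <- !sumR_plus, <- !sumR_scal, <- !sumR_plus.
  apply sumR_ext. intros i _.
  rewrite (sumR_ext n (fun j => M i j * (u j + t * v j))
                    (fun j => M i j * u j + t * (M i j * v j))) by (intros; ring).
  rewrite sumR_plus, sumR_scal. ring.
Qed.

Lemma quad_discriminant (a b c : R) :
  0 <= a -> (forall t, 0 <= a * t * t + 2 * b * t + c) -> b * b <= a * c.
Proof.
  intros Ha H. destruct (Req_dec a 0) as [->|Hn].
  - destruct (Req_dec b 0) as [->|Hb]; [lra|].
    specialize (H (- (c + 1) / (2 * b))).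
    replace (0 * (- (c + 1) / (2 * b)) * (- (c + 1) / (2 * b)) + 2 * b * (- (c + 1) / (2 * b)) + c)
      with (-1) in H by (field; auto). lra.
  - specialize (H (- b / a)).
    replace (a * (- b / a) * (- b / a) + 2 * b * (- b / a) + c) with (c - b * b / a) in H
      by (field; auto).
    assert (b * b = a * (b * b / a)) by (field; auto). nra.
Qed.

Lemma cauchy_schwarz_form n M u v :
  symmetric n M -> (forall w, 0 <= bil n M w w) ->
  bil n M u v * bil n M u v <= bil n M u u * bil n M v v.
Proof.
  intros Hs Hp. rewrite (Rmult_comm (bil n M u u)). apply quad_discriminant; [apply Hp|]. intros t.
  specialize (Hp (fun i => u i + t * v i)).
  rewrite bil_line, (bil_sym n M v u Hs) in Hp. nra.
Qed.

Lemma cauchy_schwarz n u v : dot n u v * dot n u v <= nrm n u * nrm n v.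
Proof.
  unfold nrm. rewrite <- !bil_idm. apply cauchy_schwarz_form.
  - intros i j _ _. unfold idm. rewrite Nat.eqb_sym. reflexivity.
  - intros w. rewrite bil_idm. apply nrm_nonneg.
Qed.

Lemma bil_crude_bound n M v :
  bil n M v v <= sumR n (fun i => sumR n (fun j => Rabs (M i j))) * nrm n v.
Proof.
  unfold bil, dot, mv. rewrite Rmult_comm, <- sumR_scal. apply sumR_le. intros i Hi.
  rewrite <- !sumR_scal. apply sumR_le. intros j Hj.
  pose proof (nrm_coord n v i Hi). pose proof (nrm_coord n v j Hj).
  assert (v i * (M i j * v j) <= Rabs (M i j) * Rabs (v i * v j)).
  { rewrite <- Rabs_mult. replace (v i * (M i j * v j)) with (M i j * (v i * v j)) by ring.
    apply Rle_abs. }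
  assert (Rabs (v i * v j) <= nrm n v).
  { rewrite Rabs_mult. pose proof (Rabs_pos (v i)). pose proof (Rabs_pos (v j)).
    assert (Rabs (v i) * Rabs (v i) = v i * v i) by (rewrite <- Rabs_mult; apply Rabs_pos_eq; nra).
    assert (Rabs (v j) * Rabs (v j) = v j * v j) by (rewrite <- Rabs_mult; apply Rabs_pos_eq; nra).
    nra. }
  pose proof (Rabs_pos (M i j)). nra.
Qed.

Lemma bil_gram n F G c x :
  (forall i j, (1 <= i <= n)%nat -> (1 <= j <= n)%nat ->
     F i j = sumR n (fun k => G i k * G j k * c k)) ->
  bil n F x x = sumR n (fun k => c k * (mv n (tr G) x k * mv n (tr G) x k)).
Proof.
  intros HF. unfold bil, dot, mv, tr.
  transitivity (sumR n (fun i => sumR n (fun j => sumR n (fun k =>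
     c k * (G i k * x i) * (G j k * x j))))).
  { apply sumR_ext. intros i Hi. rewrite <- sumR_scal. apply sumR_ext. intros j Hj.
    rewrite HF by auto.
    transitivity ((x i * x j) * sumR n (fun k => G i k * G j k * c k)); [ring|].
    rewrite <- sumR_scal. apply sumR_ext. intros; ring. }
  transitivity (sumR n (fun i => sumR n (fun k => sumR n (fun j =>
     c k * (G i k * x i) * (G j k * x j))))).
  { apply sumR_ext. intros. apply sumR_swap. }
  rewrite sumR_swap. apply sumR_ext. intros k _.
  rewrite sumR_mul, <- sumR_scal. apply sumR_ext. intros i _.
  rewrite <- sumR_scal. apply sumR_ext. intros; ring.
Qed.

Module BigopBridge.
Import all_boot Rstruct.

Lemma fold_right_big (op : R -> R -> R) idx k n (f : nat -> R) :
  fold_right op idx (map f (List.seq k n)) = \big[op/idx]_(i < n) f (k + i)%N.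
Proof.
  elim: n k => [|n IH] k; first by rewrite big_ord0.
  rewrite big_ord_recl /= IH addn0. congr (op _ _). apply: eq_bigr => i _.
  by rewrite /= addSnnS.
Qed.

Lemma fold_right_big_seq (op : R -> R -> R) idx (l : list nat) (f : nat -> R) :
  fold_right op idx (map f l) = \big[op/idx]_(x <- l) f x.
Proof. elim: l => [|x l IH]; first by rewrite big_nil. by rewrite big_cons /= IH. Qed.

Lemma seq_iota a b : List.seq a b = iota a b.
Proof. elim: b a => [|b IH] a //=; by rewrite IH. Qed.

Lemma sumR_big n f : sumR n f = \big[Rplus/0%R]_(i < n) f i.+1.
Proof. by rewrite /sumR fold_right_big. Qed.
End BigopBridge.

Definition kernel_vector n (B : nat -> nat -> R) (v : nat -> R) : Prop :=
  (exists i, (1 <= i <= n)%nat /\ v i <> 0) /\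
  forall i, (1 <= i <= n)%nat -> mv n B v i = 0.

Definition is_right_inverse n (B C : nat -> nat -> R) : Prop :=
  forall i j, (1 <= i <= n)%nat -> (1 <= j <= n)%nat -> mv n B (fun k => C k j) i = idm i j.

(* A square matrix has a nontrivial kernel or a right inverse: MathComp's
   determinant theory, transported along the reindexing 'I_n ~ [1..n]. *)
Module MatrixFacts.
Import all_boot all_algebra Rstruct BigopBridge.
Import GRing.Theory.
Local Open Scope ring_scope.

Lemma singular_or_invertible n (B : nat -> nat -> R) :
  (exists v, kernel_vector n B v) \/ (exists C, is_right_inverse n B C).
Proof.
  rewrite /kernel_vector /is_right_inverse.
  case: n => [|n].
    right. exists (fun _ _ => 0%R) => i j Hi. exfalso. lia.
  pose M : 'M[R]_n.+1 := \matrix_(i < n.+1, j < n.+1) B j.+1 i.+1.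
  have ordK (i : nat) : le 1 i /\ le i n.+1 -> (inord i.-1 : 'I_n.+1) = i.-1 :> nat.
    by move=> Hi; rewrite inordK //; apply/ltP; lia.
  have [Mu|Mnu] := boolP (M \in unitmx).
  - right. exists (fun k j => invmx M (inord j.-1) (inord k.-1)) => i j Hi Hj.
    move/matrixP: (mulVmx Mu) => /(_ (inord j.-1) (inord i.-1)).
    rewrite !mxE => H.
    have -> : idm i j = (inord j.-1 == inord i.-1 :> 'I_n.+1)%:R :> R.
      rewrite /idm. case: (Nat.eqb_spec i j) => [->|ne]; first by rewrite eqxx.
      have : (inord j.-1 : 'I_n.+1) != inord i.-1.
        apply/eqP => E. apply: ne. have := congr1 val E. rewrite /= ordK // ordK //. lia.
      by move/negPf => ->.
    rewrite /mv sumR_big -H. apply: eq_bigr => k _. rewrite mxE ordK //.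
    have -> : i.-1.+1 = i by lia.
    by rewrite mulrC /= inord_val.
  - left.
    have : \det M == 0 by rewrite unitmxE unitfE negbK in Mnu.
    case/det0P => v nz vM.
    exists (fun i => v 0 (inord i.-1)). split.
    + have [k Hk] : exists k : 'I_n.+1, v 0 k != 0.
        apply/existsP. apply: contraNT nz => /existsPn H0.
        apply/eqP/matrixP => a b. rewrite ord1 mxE. by move/negbNE/eqP: (H0 b).
      exists k.+1. split; first by split; [lia| have := ltn_ord k; move/ltP; lia].
      apply/eqP. by rewrite /= inord_val.
    + move=> i Hi. move/matrixP: vM => /(_ 0 (inord i.-1)). rewrite !mxE => H.
      rewrite /mv sumR_big -[RHS]H. apply: eq_bigr => k _. rewrite mxE ordK //.
      have -> : i.-1.+1 = i by lia.
      by rewrite mulrC /= inord_val.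
Qed.
End MatrixFacts.

(** The Rayleigh bound: the largest eigenvalue of a symmetric matrix bounds its
    quadratic form. *)

Lemma eigen_bil n M lam x :
  (forall i, (1 <= i <= n)%nat -> mv n M x i = lam * x i) -> bil n M x x = lam * nrm n x.
Proof.
  intros Hx. unfold bil, nrm, dot. rewrite <- sumR_scal.
  apply sumR_ext. intros i Hi. rewrite Hx by auto. ring.
Qed.

Lemma glb_exists (S : R -> Prop) (b : R) :
  (exists t, S t) -> (forall t, S t -> b <= t) ->
  exists m, (forall t, S t -> m <= t) /\ (forall b', (forall t, S t -> b' <= t) -> b' <= m).
Proof.
  intros [t0 Ht0] Hb.
  destruct (completeness (fun r => S (- r))) as [m [Hub Hlub]].
  - exists (- b). intros r Hr. apply Hb in Hr. lra.
  - exists (- t0). rewrite Ropp_involutive. auto.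
  - exists (- m). split.
    + intros t Ht. assert (- t <= m) by (apply Hub; rewrite Ropp_involutive; auto). lra.
    + intros b' Hb'. assert (m <= - b') by (apply Hlub; intros r Hr; apply Hb' in Hr; lra). lra.
Qed.

Definition rayleigh_const n M (t : R) : Prop := forall v, bil n M v v <= t * nrm n v.

Lemma best_rayleigh_const n M lam : IsEigenvalue n M lam ->
  exists mu, rayleigh_const n M mu /\ forall t, rayleigh_const n M t -> mu <= t.
Proof.
  intros [x [[i0 [Hi0 Hx0]] Hx]].
  assert (Hxl : bil n M x x = lam * nrm n x) by (apply eigen_bil; auto).
  assert (Nx : 0 < nrm n x) by (apply (nrm_pos n x i0); auto).
  destruct (glb_exists (rayleigh_const n M) lam) as [mu [Hmu_lb Hmu_glb]].
  - exists (sumR n (fun i => sumR n (fun j => Rabs (M i j)))). intros v. apply bil_crude_bound.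
  - intros t Ht. specialize (Ht x). rewrite Hxl in Ht. apply Rmult_le_reg_r with (nrm n x); auto.
  - exists mu. split; [|exact Hmu_lb]. intros v. pose proof (nrm_nonneg n v).
    destruct (Req_dec (nrm n v) 0) as [E|E].
    + pose proof (bil_crude_bound n M v). rewrite E in *. lra.
    + (* the Rayleigh quotient of v is a lower bound of the admissible constants *)
      assert (Hq : bil n M v v / nrm n v <= mu).
      { apply Hmu_glb. intros t Ht. specialize (Ht v).
        apply Rmult_le_reg_r with (nrm n v); [lra|].
        unfold Rdiv. rewrite Rmult_assoc, Rinv_l; lra. }
      apply Rmult_le_compat_r with (r := nrm n v) in Hq; [|lra].
      unfold Rdiv in Hq. rewrite Rmult_assoc, Rinv_l in Hq; lra.
Qed.

Definition shift (mu : R) (M : nat -> nat -> R) : nat -> nat -> R :=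
  fun i j => mu * idm i j - M i j.

Lemma mv_shift n mu M w i : (1 <= i <= n)%nat -> mv n (shift mu M) w i = mu * w i - mv n M w i.
Proof.
  intros Hi. rewrite <- (mv_idm n w i Hi). unfold mv, shift.
  rewrite (sumR_ext n _ (fun j => mu * (idm i j * w j) + -1 * (M i j * w j))) by (intros; ring).
  rewrite sumR_plus, !sumR_scal. ring.
Qed.

Lemma bil_shift n mu M w : bil n (shift mu M) w w = mu * nrm n w - bil n M w w.
Proof.
  unfold bil at 1, dot.
  rewrite (sumR_ext n _ (fun i => mu * (w i * w i) + -1 * (w i * mv n M w i))).
  - rewrite sumR_plus, !sumR_scal. unfold bil, nrm, dot. ring.
  - intros i Hi. rewrite mv_shift by auto. ring.
Qed.

Lemma shift_symmetric n mu M : symmetric n M -> symmetric n (shift mu M).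
Proof. intros Hs i j Hi Hj. unfold shift, idm. rewrite Nat.eqb_sym, Hs by auto. reflexivity. Qed.

Lemma mv_right_inverse n B C x : is_right_inverse n B C ->
  forall i, (1 <= i <= n)%nat -> mv n B (mv n C x) i = x i.
Proof.
  intros HC i Hi. unfold mv.
  transitivity (sumR n (fun j => sumR n (fun k => B i k * C k j) * x j)).
  - transitivity (sumR n (fun k => sumR n (fun j => B i k * C k j * x j))).
    + apply sumR_ext. intros k _. rewrite <- sumR_scal. apply sumR_ext. intros; ring.
    + rewrite sumR_swap. apply sumR_ext. intros j _. rewrite Rmult_comm, <- sumR_scal.
      apply sumR_ext. intros; ring.
  - rewrite <- (sumR_delta n i x Hi). apply sumR_ext. intros j Hj.
    fold (mv n B (fun k => C k j) i). rewrite HC by auto. unfold idm.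
    destruct (Nat.eqb i j); ring.
Qed.

(* A positive semidefinite symmetric form with a right inverse C is coercive:
   with z = C x, Cauchy-Schwarz gives
   |x|^4 = (x^T B z)^2 <= (x^T B x)(z^T B z) = (x^T B x)(x^T C x) <= (x^T B x) K |x|^2. *)
Lemma psd_invertible_coercive n B C :
  symmetric n B -> (forall w, 0 <= bil n B w w) ->
  is_right_inverse n B C ->
  exists K, 0 < K /\ forall x, nrm n x <= K * bil n B x x.
Proof.
  intros Hs Hp HC.
  set (K := sumR n (fun i => sumR n (fun j => Rabs (C i j)))).
  assert (K0 : 0 <= K) by (apply sumR_nonneg; intros; apply sumR_nonneg; intros; apply Rabs_pos).
  exists (K + 1). split; [lra|]. intros x.
  set (z := mv n C x).
  assert (Hxz : bil n B x z = nrm n x).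
  { unfold bil, nrm, dot, z. apply sumR_ext. intros i Hi. rewrite mv_right_inverse; auto. }
  assert (Hzz : bil n B z z = bil n C x x).
  { unfold bil at 1, dot. rewrite (sumR_ext n _ (fun i => z i * x i)).
    - unfold bil, dot. apply sumR_ext. intros; apply Rmult_comm.
    - intros i Hi. unfold z. rewrite mv_right_inverse; auto. }
  pose proof (cauchy_schwarz_form n B x z Hs Hp) as Hcs. rewrite Hxz, Hzz in Hcs.
  pose proof (bil_crude_bound n C x) as HCx. fold K in HCx.
  pose proof (Hp x). pose proof (nrm_nonneg n x).
  destruct (Req_dec (nrm n x) 0) as [E|E]; [rewrite E; nra|].
  assert (nrm n x <= bil n B x x * K) by (apply Rmult_le_reg_r with (nrm n x); nra).
  nra.
Qed.

(* Let mu be the least admissible constant. Then mu I - M is positive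
   semidefinite; if it is singular, mu is an eigenvalue, so mu <= T; if it is
   invertible, it is coercive and mu is not least. *)
Lemma rayleigh n M T :
  symmetric n M -> IsLargestEigenvalue n M T -> forall v, bil n M v v <= T * nrm n v.
Proof.
  intros Hs [HTeig HT].
  destruct (best_rayleigh_const n M T HTeig) as [mu [Hmu Hmu_least]].
  set (B := shift mu M).
  assert (HBp : forall w, 0 <= bil n B w w).
  { intros w. unfold B. rewrite bil_shift. specialize (Hmu w). lra. }
  destruct (MatrixFacts.singular_or_invertible n B) as [[v [[i1 [Hi1 Hv1]] Hker]] | [C HC]].
  - assert (HmuT : mu <= T).
    { apply HT. exists v. split; [exists i1; auto|]. intros i Hi.
      specialize (Hker i Hi). unfold B in Hker. rewrite mv_shift in Hker by auto.
      change (mv n M v i = mu * v i). lra. }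
    intros w. specialize (Hmu w). pose proof (nrm_nonneg n w). nra.
  - exfalso.
    destruct (psd_invertible_coercive n B C (shift_symmetric n mu M Hs) HBp HC)
      as [K [HK HKx]].
    assert (Hbetter : rayleigh_const n M (mu - / K)).
    { intros w. specialize (HKx w). unfold B in HKx. rewrite bil_shift in HKx.
      assert (nrm n w * / K <= mu * nrm n w - bil n M w w).
      { apply Rmult_le_reg_r with K; auto. rewrite Rmult_assoc, Rinv_l; lra. }
      lra. }
    apply Hmu_least in Hbetter. assert (0 < / K) by (apply Rinv_0_lt_compat; auto). lra.
Qed.

(** The divisor-sum identity  sum_{d | g} J_s(d) = g^s. *)

Lemma Rpower_INR_mul s a b : (0 < a)%nat -> (0 < b)%nat ->
  Rpower (INR (a * b)) s = Rpower (INR a) s * Rpower (INR b) s.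
Proof. intros. rewrite mult_INR, Rpower_mult_distr; auto using lt_0_INR. Qed.

Lemma Rpower_INR_opp s p : (0 < p)%nat -> Rpower (INR p) s * Rpower (INR p) (- s) = 1.
Proof.
  intros. rewrite <- Rpower_plus. replace (s + - s) with 0 by ring.
  apply Rpower_O, lt_0_INR; auto.
Qed.

Lemma Rpower_INR_1 s : Rpower (INR 1) s = 1.
Proof. unfold Rpower. simpl. rewrite ln_1, Rmult_0_r. apply exp_0. Qed.

(* J_s is multiplicative and J_s(p^a) = p^(a s) - p^((a-1) s); the identity
   follows by induction, splitting off the full power of a prime divisor. *)
Module JordanTotient.
Import all_boot zify Rstruct BigopBridge.

Lemma Zdivide_of_nat d p : Z.divide (Z.of_nat d) (Z.of_nat p) <-> (d %| p).
Proof.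
  split.
  - move=> [z Hz]. apply/dvdnP. case: (Nat.eq_dec d 0) => [E|E].
    + subst d. exists 0%N. lia.
    + have z0 : (0 <= z)%Z by nia. exists (Z.to_nat z). lia.
  - move/dvdnP=> [k ->]. exists (Z.of_nat k). lia.
Qed.

Lemma Zprime_of_nat p : Znumtheory.prime (Z.of_nat p) <-> prime p.
Proof.
  rewrite -prime_alt. split.
  - move=> [H1 H2]. apply/primeP. split; first lia.
    move=> d Hd. have dp : (d <= p)%N by apply: dvdn_leq => //; lia.
    have d0 : (0 < d)%N by case: d Hd dp => //; rewrite dvd0n; move/eqP => E; lia.
    apply/orP. case: (ltnP 1 d) => [d1|d1]; last by left; apply/eqP; lia.
    case: (ltnP d p) => [dlt|dge]; last by right; apply/eqP; lia.
    exfalso. apply: (H2 (Z.of_nat d)); first lia. exact/Zdivide_of_nat.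
  - move/primeP => [H1 H2]. split; first lia.
    move=> z Hz Hd. have := H2 (Z.to_nat z).
    have -> : (Z.to_nat z %| p) by apply/Zdivide_of_nat; rewrite Z2Nat.id; [|lia].
    move=> /(_ isT) /orP [] /eqP; lia.
Qed.

Lemma eqb_mod_dvdn k p : (0 < p)%N -> Nat.eqb (k mod p) 0 = (p %| k).
Proof.
  move=> Hp. have -> // : Nat.modulo k p = k %% p.
  symmetry. apply: (Nat.mod_unique k p (k %/ p)).
  all: have := ltn_pmod k Hp; have := divn_eq k p; lia.
Qed.

Definition jfactor (s : R) (k p : nat) : R :=
  if prime p && (p %| k) then 1 - Rpower (INR p) (- s) else 1.

Definition jordanN (s : R) (N k : nat) : R :=
  Rpower (INR k) s * \big[Rmult/1]_(i < N) jfactor s k i.+1.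

Lemma Jordan_jordanN s N k : (0 < k)%N -> (k <= N)%N -> Jordan s k = jordanN s N k.
Proof.
  move=> k0 kN. rewrite /Jordan fold_right_big /jordanN. congr (_ * _).
  elim: N kN => [|N IH] kN; first by lia.
  case: (ltnP k N.+1) => [lt|ge]; last first.
    have -> : N.+1 = k by lia. apply: eq_bigr => i _.
    rewrite /jfactor add1n. case: (prime_dec (Z.of_nat i.+1)) => [P|P].
    - by rewrite (proj1 (Zprime_of_nat _) P) eqb_mod_dvdn.
    - have /negPf -> // : ~~ prime i.+1 by apply/negP => H; apply/P/Zprime_of_nat.
  (* primes beyond k do not divide k *)
  rewrite big_ord_recr /= -IH; last by lia.
  rewrite /jfactor. have -> : (N.+1 %| k) = false.
    by apply/negP => H; have := dvdn_leq k0 H; lia.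
  by rewrite andbF Rmult_1_r.
Qed.

Lemma jordanN_1 s N : jordanN s N 1 = 1.
Proof.
  rewrite /jordanN Rpower_INR_1 big1 ?Rmult_1_r // => i _.
  rewrite /jfactor. case: (boolP (prime i.+1)) => //= Pi.
  rewrite dvdn1. by have := prime_gt1 Pi; case: eqP => // ->.
Qed.

Lemma jordanN_mul s N a b : (0 < a)%N -> (0 < b)%N -> coprime a b ->
  jordanN s N (a * b) = jordanN s N a * jordanN s N b.
Proof.
  move=> a0 b0 cab. rewrite /jordanN.
  have -> : \big[Rmult/1]_(i < N) jfactor s (a * b) i.+1 =
            \big[Rmult/1]_(i < N) jfactor s a i.+1 * \big[Rmult/1]_(i < N) jfactor s b i.+1.
    rewrite -big_split /=. apply: eq_bigr => i _.
    rewrite /jfactor. case: (boolP (prime i.+1)) => /= [P|_]; last by rewrite Rmult_1_r.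
    rewrite Euclid_dvdM //.
    case: (boolP (i.+1 %| a)) => da; case: (boolP (i.+1 %| b)) => db /=;
      try by rewrite ?Rmult_1_r ?Rmult_1_l.
    (* a common prime divisor would contradict coprimality *)
    exfalso. have : i.+1 %| gcdn a b by rewrite dvdn_gcd da db.
    move/eqP: cab => ->. rewrite dvdn1. have := prime_gt1 P. lia.
  rewrite Rpower_INR_mul; [ring|exact/ltP|exact/ltP].
Qed.

Lemma jordanN_prime_power s N p a : prime p -> (0 < a)%N -> (p <= N)%N ->
  jordanN s N (p ^ a) = Rpower (INR (p ^ a)) s * (1 - Rpower (INR p) (- s)).
Proof.
  move=> P a0 pN. have p1 := prime_gt1 P. have pN' : (p.-1 < N)%N by lia.
  rewrite /jordanN (bigD1 (Ordinal pN')) //= big1 ?Rmult_1_r.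
  - rewrite /jfactor. have -> : p.-1.+1 = p by lia. by rewrite P Euclid_dvdX // dvdnn a0.
  - move=> i Hi. rewrite /jfactor. case: (boolP (prime i.+1)) => //= Pi.
    rewrite Euclid_dvdX // dvdn_prime2 // a0 andbT.
    case: eqP => // E. exfalso. move/negP: Hi; apply. apply/eqP. apply: val_inj => /=. lia.
Qed.

Lemma divisors_filter_dvd g m : (0 < g)%N -> (0 < m)%N -> m %| g ->
  perm_eq [seq d <- divisors g | d %| m] (divisors m).
Proof.
  move=> g0 m0 mg.
  apply: uniq_perm; [exact: filter_uniq (divisors_uniq g)|exact: divisors_uniq|].
  move=> d. rewrite mem_filter -!dvdn_divisors //.
  apply/andP/idP => [[]//|dm]. split => //. exact: dvdn_trans dm mg.
Qed.

Lemma divisors_full_power p r a : prime p -> (0 < a)%N -> (0 < r)%N -> coprime p r ->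
  perm_eq [seq d <- divisors (r * p ^ a) | ~~ (d %| r * p ^ a.-1)]
          [seq (u * p ^ a)%N | u <- divisors r].
Proof.
  move=> P a0 r0 cpr. have p1 := prime_gt1 P.
  have pa0 : (0 < p ^ a)%N by rewrite expn_gt0; lia.
  have g0 : (0 < r * p ^ a)%N by rewrite muln_gt0 r0.
  have paE : (p ^ a = p ^ a.-1 * p)%N by rewrite -{1}(prednK a0) expnS mulnC.
  apply: uniq_perm; [exact: filter_uniq (divisors_uniq _)| |].
    rewrite map_inj_uniq; first exact: divisors_uniq.
    by move=> u v /eqP; rewrite eqn_pmul2r // => /eqP.
  move=> d. rewrite mem_filter. apply/andP/mapP.
  - move=> [nd]. rewrite -dvdn_divisors // => dg.
    have d0 : (0 < d)%N by apply: dvdn_gt0 dg.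
    have [v cpv dE] := pfactor_coprime P d0. set b := logn p d in dE.
    have vr : v %| r.
      have : (v %| r * p ^ a)%N by apply: dvdn_trans dg; rewrite dE dvdn_mulr.
      by rewrite Gauss_dvdl // coprimeXr // coprime_sym.
    have ba : (b <= a)%N.
      have : (p ^ b %| r * p ^ a)%N by apply: dvdn_trans dg; rewrite dE dvdn_mull.
      by rewrite Gauss_dvdr ?coprimeXl // dvdn_Pexp2l.
    case: (ltnP b a) => [ltba|geba].
      exfalso. move/negP: nd; apply. rewrite dE.
      apply: dvdn_mul => //. apply: dvdn_exp2l. lia.
    exists v; first by rewrite -dvdn_divisors.
    by rewrite dE; have -> : b = a by lia.
  - move=> [u ur ->]. rewrite -!dvdn_divisors // in ur *.
    split; last by rewrite dvdn_mul.
    (* u p^a | r p^(a-1) would force p | r *)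
    apply/negP. rewrite paE mulnA mulnAC dvdn_pmul2r; last by rewrite expn_gt0; lia.
    move=> upr. have pr : p %| r by apply: dvdn_trans upr; apply: dvdn_mull.
    have : p %| gcdn p r by rewrite dvdn_gcd dvdnn pr.
    move/eqP: cpr => ->. rewrite dvdn1. lia.
Qed.

Lemma jordanN_divisor_sum s N g : (0 < g)%N -> (g <= N)%N ->
  \big[Rplus/0]_(d <- divisors g) jordanN s N d = Rpower (INR g) s.
Proof.
  elim/ltn_ind: g => g IH g0 gN.
  case: (ltnP 1 g) => [g1|g1]; last first.
    have -> : g = 1%N by lia. by rewrite big_seq1 jordanN_1 Rpower_INR_1.
  (* split off the full power p^a of the smallest prime divisor p of g *)
  have P := pdiv_prime g1. set p := pdiv g in P *. have p1 := prime_gt1 P.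
  have [r cpr gE] := pfactor_coprime P g0. set a := logn p g in gE.
  have a0 : (0 < a)%N by rewrite /a logn_gt0 mem_primes P g0 pdiv_dvd.
  have r0 : (0 < r)%N by move: g0; rewrite gE; case: r {cpr gE}.
  have q0 : (0 < p ^ a.-1)%N by rewrite expn_gt0; lia.
  have paE : (p ^ a = p ^ a.-1 * p)%N by rewrite -{1}(prednK a0) expnS mulnC.
  have rq_g : (r * p ^ a.-1 < g)%N by rewrite gE paE mulnA ltn_Pmulr // muln_gt0 r0.
  have r_g : (r < g)%N by apply: leq_ltn_trans rq_g; rewrite leq_pmulr.
  rewrite (bigID (fun d => d %| r * p ^ a.-1)) /=.
  rewrite -[\big[Rplus/0]_(d <- _ | d %| _) _]big_filter.
  rewrite (perm_big _ (divisors_filter_dvd _ _ g0 _ _)); first last.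
  - by rewrite gE paE mulnA dvdn_mulr.
  - by rewrite muln_gt0 r0.
  rewrite -[\big[Rplus/0]_(d <- _ | ~~ _) _]big_filter.
  rewrite [in divisors g]gE (perm_big _ (divisors_full_power _ _ _ P a0 r0 cpr)) big_map.
  (* the second sum factors as (sum_{u | r} J(u)) J(p^a) *)
  have -> : \big[Rplus/0]_(u <- divisors r) jordanN s N (u * p ^ a) =
            \big[Rplus/0]_(u <- divisors r) jordanN s N u * jordanN s N (p ^ a).
    rewrite big_distrl /= big_seq [in RHS]big_seq. apply: eq_bigr => u.
    rewrite -dvdn_divisors // => ur. apply: jordanN_mul; [exact: dvdn_gt0 ur|lia|].
    apply: coprime_dvdl ur _. by rewrite coprime_sym coprimeXl.
  have pN : (p <= N)%N by apply: leq_trans (dvdn_leq g0 (pdiv_dvd g)) gN.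
  have rq0 : (0 < r * p ^ a.-1)%N by rewrite muln_gt0 r0.
  rewrite !IH //; try (apply: leq_trans gN; exact: ltnW).
  rewrite jordanN_prime_power // gE paE !Rpower_INR_mul; try (apply/ltP; lia).
  (* r^s q^s + r^s q^s p^s (1 - p^-s) = r^s q^s p^s,  with q = p^(a-1) *)
  have Hp := Rpower_INR_opp s p ltac:(apply/ltP; lia).
  set rs := Rpower (INR r) s in Hp *. set qs := Rpower (INR (p ^ a.-1)) s.
  set ps := Rpower (INR p) s in Hp *. set ps' := Rpower (INR p) (- s) in Hp *.
  transitivity (rs * (qs * ps) + rs * qs * (1 - ps * ps')); first by ring.
  by rewrite Hp; ring.
Qed.
Lemma Jordan_divisor_sum s g N : le 1 g /\ le g N ->
  sumR N (fun d => if Nat.eqb (g mod d) 0 then Jordan s d else 0) = Rpower (INR g) s.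
Proof.
  move=> [/leP g0 /leP gN].
  rewrite /sumR fold_right_big_seq seq_iota.
  transitivity (\big[Rplus/0]_(d <- iota 1 N | d %| g) Jordan s d).
    rewrite [in RHS]big_mkcond big_seq [in RHS]big_seq. apply: eq_bigr => d.
    by rewrite mem_iota => /andP [d1 _]; rewrite eqb_mod_dvdn.
  rewrite -big_filter (perm_big (divisors g)); last first.
    apply: uniq_perm; [exact: filter_uniq (iota_uniq 1 N)|exact: divisors_uniq|].
    move=> d. rewrite mem_filter mem_iota -dvdn_divisors //.
    apply/andP/idP => [[]//|dg]. split => //.
    have := dvdn_leq g0 dg. have := dvdn_gt0 g0 dg. move=> d0 dleg. apply/andP; split; lia.
  rewrite big_seq (eq_bigr (jordanN s N)); last first.
    move=> d. rewrite -dvdn_divisors // => dg. apply: Jordan_jordanN; first exact: dvdn_gt0 dg.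
    have := dvdn_leq g0 dg. lia.
  by rewrite -big_seq jordanN_divisor_sum.
Qed.
End JordanTotient.

Lemma A_ab_factor alpha beta i j : (1 <= i)%nat -> (1 <= j)%nat ->
  A_ab alpha beta i j =
  Rpower (INR i) beta * Rpower (INR (Nat.gcd i j)) (alpha - beta) * Rpower (INR j) beta.
Proof.
  intros Hi Hj. unfold A_ab, Nat.lcm.
  set (g := Nat.gcd i j).
  assert (g0 : (0 < g)%nat).
  { destruct (Nat.eq_dec g 0) as [E|E]; [apply Nat.gcd_eq_0 in E; lia|lia]. }
  destruct (Nat.gcd_divide_r i j) as [c Hc]. fold g in Hc.
  assert (c0 : (0 < c)%nat) by (destruct c; lia).
  replace (j / g)%nat with c by (rewrite Hc; symmetry; apply Nat.div_mul; lia).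
  rewrite Hc, (Nat.mul_comm c g), !Rpower_INR_mul by lia.
  unfold Rminus. rewrite Rpower_plus.
  pose proof (Rpower_INR_opp beta g g0) as Hg.
  transitivity (Rpower (INR g) alpha * Rpower (INR i) beta * Rpower (INR c) beta *
                (Rpower (INR g) beta * Rpower (INR g) (- beta))); [rewrite Hg|]; ring.
Qed.

Lemma gcd_power_divisor_sum s n i j : (1 <= i <= n)%nat -> (1 <= j <= n)%nat ->
  Rpower (INR (Nat.gcd i j)) s = sumR n (fun k => E_mat i k * E_mat j k * Jordan s k).
Proof.
  intros Hi Hj.
  assert (Hg : (1 <= Nat.gcd i j <= n)%nat).
  { pose proof (Nat.divide_pos_le (Nat.gcd i j) i ltac:(lia) (Nat.gcd_divide_l i j)).
    destruct (Nat.eq_dec (Nat.gcd i j) 0) as [E|E]; [apply Nat.gcd_eq_0 in E|]; lia. }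
  rewrite <- (JordanTotient.Jordan_divisor_sum s (Nat.gcd i j) n Hg).
  apply sumR_ext. intros k Hk. unfold E_mat.
  assert (Hdiv : forall a, Nat.eqb (a mod k) 0 = true <-> Nat.divide k a).
  { intros a. rewrite Nat.eqb_eq. apply Nat.Lcm0.mod_divide. }
  destruct (Nat.eqb (Nat.gcd i j mod k) 0) eqn:Eg.
  - apply Hdiv in Eg.
    assert (Ei : Nat.eqb (i mod k) 0 = true).
    { apply Hdiv. eapply Nat.divide_trans; [apply Eg|apply Nat.gcd_divide_l]. }
    assert (Ej : Nat.eqb (j mod k) 0 = true).
    { apply Hdiv. eapply Nat.divide_trans; [apply Eg|apply Nat.gcd_divide_r]. }
    rewrite Ei, Ej. ring.
  - destruct (Nat.eqb (i mod k) 0) eqn:Ei; [|ring].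
    destruct (Nat.eqb (j mod k) 0) eqn:Ej; [|ring].
    (* a common divisor of i and j divides their gcd *)
    exfalso. apply Hdiv in Ei, Ej.
    assert (Nat.eqb (Nat.gcd i j mod k) 0 = true) by (apply Hdiv, Nat.gcd_greatest; auto).
    congruence.
Qed.

Lemma A_ab_quadratic_form n alpha beta x :
  bil n (A_ab alpha beta) x x =
  sumR n (fun k => Jordan (alpha - beta) k *
    (mv n (tr E_mat) (fun i => Rpower (INR i) beta * x i) k *
     mv n (tr E_mat) (fun i => Rpower (INR i) beta * x i) k)).
Proof.
  rewrite (bil_gram n _ (fun i k => E_mat i k * Rpower (INR i) beta) (Jordan (alpha - beta))).
  - apply sumR_ext. intros k _. unfold mv, tr.
    rewrite (sumR_ext n (fun j => E_mat j k * Rpower (INR j) beta * x j)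
                        (fun j => E_mat j k * (Rpower (INR j) beta * x j))) by (intros; ring).
    reflexivity.
  - intros i j Hi Hj. rewrite A_ab_factor, (gcd_power_divisor_sum _ n i j) by lia.
    transitivity ((Rpower (INR i) beta * Rpower (INR j) beta) *
      sumR n (fun k => E_mat i k * E_mat j k * Jordan (alpha - beta) k)); [ring|].
    rewrite <- sumR_scal. apply sumR_ext. intros; ring.
Qed.

Lemma EtE_quadratic_form n v : bil n (EtE n) v v = nrm n (mv n E_mat v).
Proof.
  rewrite (bil_gram n _ (tr E_mat) (fun _ => 1)).
  - unfold nrm, dot. apply sumR_ext. intros. rewrite Rmult_1_l. reflexivity.
  - intros i j _ _. unfold EtE, tr. apply sumR_ext. intros; ring.
Qed.

Lemma EtE_symmetric n : symmetric n (EtE n).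
Proof. intros i j _ _. unfold EtE. apply sumR_ext. intros; ring. Qed.

Lemma transpose_bound n G T : 0 <= T ->
  (forall v, nrm n (mv n G v) <= T * nrm n v) ->
  forall y, nrm n (mv n (tr G) y) <= T * nrm n y.
Proof.
  intros T0 HG y. set (w := mv n (tr G) y).
  assert (Hw : nrm n w = dot n y (mv n G w)) by apply dot_mv_tr.
  pose proof (cauchy_schwarz n y (mv n G w)) as Hcs. rewrite <- Hw in Hcs.
  pose proof (HG w). pose proof (nrm_nonneg n w). pose proof (nrm_nonneg n y).
  pose proof (nrm_nonneg n (mv n G w)).
  destruct (Req_dec (nrm n w) 0) as [E|E]; [rewrite E; nra|].
  assert (nrm n w * nrm n w <= (T * nrm n y) * nrm n w) by nra.
  apply Rmult_le_reg_r with (nrm n w); lra.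
Qed.

Lemma maxR_ge n f k : (1 <= k <= n)%nat -> f k <= maxR n f.
Proof.
  intros Hk. unfold maxR. assert (Hin : In k (seq 1 n)) by (apply in_seq; lia).
  induction (seq 1 n) as [|a l IH]; simpl in *; [tauto|].
  destruct Hin as [->|Hin]; [apply Rmax_l|].
  eapply Rle_trans; [apply IH; auto|apply Rmax_r].
Qed.

Lemma maxR_nonneg n f : 0 <= maxR n f.
Proof.
  unfold maxR. induction (seq 1 n) as [|a l IH]; simpl; [lra|].
  eapply Rle_trans; [apply IH|apply Rmax_r].
Qed.

Lemma weighted_square_sum_bound n c w :
  Rabs (sumR n (fun k => c k * (w k * w k))) <= maxR n (fun k => Rabs (c k)) * nrm n w.
Proof.
  eapply Rle_trans; [apply sumR_abs|]. unfold nrm, dot. rewrite <- sumR_scal.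
  apply sumR_le. intros k Hk. rewrite Rabs_mult, (Rabs_pos_eq (w k * w k)) by nra.
  apply Rmult_le_compat_r; [nra|]. apply (maxR_ge n (fun k => Rabs (c k))); auto.
Qed.

Lemma weight_bound beta n x :
  nrm n (fun i => Rpower (INR i) beta * x i) <= Rmax 1 (Rpower (INR n) (2 * beta)) * nrm n x.
Proof.
  unfold nrm, dot. rewrite <- sumR_scal. apply sumR_le. intros i Hi.
  assert (Hd : Rpower (INR i) beta * Rpower (INR i) beta <= Rmax 1 (Rpower (INR n) (2 * beta))).
  { rewrite <- Rpower_plus. replace (beta + beta) with (2 * beta) by ring.
    assert (1 <= INR i) by (apply (le_INR 1); lia).
    assert (INR i <= INR n) by (apply le_INR; lia).
    destruct (Rle_dec 0 (2 * beta)).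
    - eapply Rle_trans; [|apply Rmax_r]. apply Rle_Rpower_l; auto. lra.
    - eapply Rle_trans; [|apply Rmax_l]. rewrite <- (Rpower_O (INR i)) by lra.
      apply Rle_Rpower; auto. lra. }
  replace (Rpower (INR i) beta * x i * (Rpower (INR i) beta * x i))
    with ((Rpower (INR i) beta * Rpower (INR i) beta) * (x i * x i)) by ring.
  apply Rmult_le_compat_r; [nra|auto].
Qed.

Theorem corollary3p3 (n : nat) (alpha beta lam T : R) :
  (1 <= n)%nat ->
  IsLargestEigenvalue n (EtE n) T ->
  IsEigenvalue n (A_ab alpha beta) lam ->
  Rabs lam <= T * Rmax 1 (Rpower (INR n) (2 * beta)) *
              maxR n (fun i => Rabs (Jordan (alpha - beta) i)).
Proof.
  (* the bound holds for every n, including n = 0 *)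
  intros _ HT [x [[i0 [Hi0 Hx0]] Hx]].
  set (y := fun i => Rpower (INR i) beta * x i).
  set (w := mv n (tr E_mat) y).
  set (m := maxR n (fun i => Rabs (Jordan (alpha - beta) i))).
  set (c := Rmax 1 (Rpower (INR n) (2 * beta))).
  assert (Nx : 0 < nrm n x) by (apply (nrm_pos n x i0); auto).
  (* Rayleigh: |E v|^2 <= T |v|^2, and T >= 0 as an eigenvalue of a Gram matrix *)
  assert (HE : forall v, nrm n (mv n E_mat v) <= T * nrm n v).
  { intros v. rewrite <- EtE_quadratic_form. apply rayleigh; [apply EtE_symmetric|exact HT]. }
  assert (T0 : 0 <= T).
  { destruct HT as [[u [[j [Hj Hu]] Hu']] _].
    pose proof (eigen_bil n _ T u Hu') as HTu. rewrite EtE_quadratic_form in HTu.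
    pose proof (nrm_nonneg n (mv n E_mat u)). pose proof (nrm_pos n u j Hj Hu). nra. }
  (* |lam| |x|^2 = |x^T A x| <= m |w|^2 <= m T |y|^2 <= m T c |x|^2 *)
  assert (H1 : Rabs lam * nrm n x <= m * nrm n w).
  { rewrite <- (Rabs_pos_eq (nrm n x)), <- Rabs_mult by lra.
    rewrite <- (eigen_bil n _ lam x Hx), A_ab_quadratic_form.
    apply weighted_square_sum_bound. }
  pose proof (transpose_bound n E_mat T T0 HE y) as H2. fold w in H2.
  pose proof (weight_bound beta n x) as H3. fold y c in H3.
  assert (m0 : 0 <= m) by apply maxR_nonneg.
  apply Rmult_le_reg_r with (nrm n x); auto.
  eapply Rle_trans; [exact H1|].
  replace (T * c * m * nrm n x) with (m * (T * (c * nrm n x))) by ring.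
  apply Rmult_le_compat_l; [exact m0|].
  eapply Rle_trans; [exact H2|]. apply Rmult_le_compat_l; [exact T0|exact H3].
Qed.
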